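(* Suppose $A,B\in M_N(\mathbb C)$ are simultaneously diagonalizable, with a common basis of eigenvectors $v_1,\dots,v_N$, $Av_i=\lambda_iv_i$, $Bv_i=\gamma_iv_i$, all $\lambda_i$ real and positive. Let $u=0$, $\theta=1$, $m\in\mathbb N$, $h=\tau/m$, $\mu_i=\gamma_i/\lambda_i$, let $\lambda_j=\max_i\lambda_i$ and $y_j=-\lambda_jh$. If $\mu_i\in D_{y_j}$ for every $i=1,\dots,N$, then the $\theta$-method is stable.
   Context: Let $\tau>0$ and consider $y'(t)=-Ay(t)+By(t-\tau)$. With $u=0$, $\theta=1$, the $\theta$-method with step $h=\tau/m$ is the recursion $y_{n+1}=y_n+h\big[-Ay_{n+1}+By_{n-m+1}\big]$, $n\ge0$, with arbitrary starting values $y_{-m},\dots,y_0\in\mathbb C^N$; it is called stable if $y_n\to0$ as $n\to\infty$ for every choice of starting values. For $y<0$, $D_y$ is the set of $\mu\in\mathbb C$ such that every root $\xi$ of $\xi^{m+1}-\xi^m=y\,\xi^{m+1}-y\mu\,\xi$ satisfies $|\xi|<1$. *)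

From mathcomp Require Import all_boot all_order all_algebra.
From mathcomp Require Import reals.
From mathcomp.real_closed Require Export complex.
Set Implicit Arguments. Unset Strict Implicit. Unset Printing Implicit Defensive.
Import Order.TTheory GRing.Theory Num.Theory.
Local Open Scope ring_scope.
Local Open Scope complex_scope.

Definition D_set (R : realType) (m : nat) (y : R) (mu : R[i]) : Prop :=
  forall xi : R[i],
    xi ^+ m.+1 - xi ^+ m = y%:C * xi ^+ m.+1 - y%:C * mu * xi ->
    `|xi| < 1.

(* The theta-method with u = 0, theta = 1, step h, delay index m:
   y_{n+1} = y_n + h [ -A y_{n+1} + B y_{n-m+1} ]   for all n >= 0,
   the sequence being indexed by integers n >= -m. *)
Definition theta1_recursion (R : realType) (N : nat) (A B : 'M[R[i]]_N)
    (m : nat) (h : R) (Y : int -> 'cV[R[i]]_N) : Prop :=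
  forall n : nat,
    Y (n%:Z + 1) = Y n%:Z + h%:C *: (- (A *m Y (n%:Z + 1)) + B *m Y (n%:Z - m%:Z + 1)).

Definition tends_to_zero (R : realType) (N : nat) (Y : nat -> 'cV[R[i]]_N) : Prop :=
  forall eps : R, 0 < eps ->
    exists n0 : nat, forall n : nat, (n0 <= n)%N -> forall i : 'I_N, `|Y n i 0| < eps%:C.

(* Stability: y_n -> 0 for every choice of starting values y_{-m},...,y_0,
   i.e. for every sequence satisfying the recursion. *)
Definition theta1_stable (R : realType) (N : nat) (A B : 'M[R[i]]_N)
    (m : nat) (h : R) : Prop :=
  forall Y : int -> 'cV[R[i]]_N, theta1_recursion A B m h Y ->
    tends_to_zero (fun n : nat => Y n%:Z).

From mathcomp Require Import all_boot all_order all_algebra.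
From mathcomp Require Import reals.
From mathcomp.real_closed Require Import complex.
From mathcomp Require Import lra ring zify.
Set Implicit Arguments. Unset Strict Implicit. Unset Printing Implicit Defensive.
Import Order.TTheory GRing.Theory Num.Theory.
Local Open Scope ring_scope.
Local Open Scope complex_scope.

(* In the eigenbasis [V] the method decouples into the scalar recursions
   [(1 + a) z_(k+1) = z_k + a mu z_(k-m+1)] with [a = lam_i h], [mu = gam_i / lam_i],
   whose characteristic polynomial is [Q_a = (1 + a) X^m - X^(m-1) - a mu]; such a
   recursion tends to 0 as soon as all roots of [Q_a] lie in the open unit disc.
   The hypothesis [mu_i \in D_(y_j)] says exactly this for the largest value
   [a = lam_j h], and the roots of [Q_a] stay in the disc when [a] decreases: at a
   root [z] of [Q_a] with [|z| >= 1] the logarithmic derivative [z Q_b'(z) / Q_b(z)]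
   would have positive real part (all roots of [Q_b] being closer to 0 than [z]),
   while an explicit computation shows that this real part is [<= 0]. *)

Section ShiftOperator.
Variable K : nzRingType.
Implicit Types (p q : {poly K}) (t : nat -> K).

(* [polyshift p t] is [p(E) t] for the shift operator [E t n = t n.+1]. *)
Definition polyshift p t n : K := \sum_(i < size p) p`_i * t (n + i)%N.

Lemma polyshift_widen d p t n : (size p <= d)%N ->
  polyshift p t n = \sum_(i < d) p`_i * t (n + i)%N.
Proof.
move=> size_le; rewrite /polyshift.
rewrite (big_ord_widen d (fun i => p`_i * t (n + i)%N) size_le) big_mkcond.
apply: eq_bigr => i _; case: ltnP => // /(nth_default 0) ->.
by rewrite mul0r.
Qed.

Lemma polyshiftB p q t n : polyshift (p - q) t n = polyshift p t n - polyshift q t n.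
Proof.
have size_pq : (size (p - q)%R <= maxn (size p) (size q))%N.
  by rewrite -(size_polyN q) size_polyD.
rewrite !(polyshift_widen (d := maxn (size p) (size q))) ?leq_maxl ?leq_maxr //.
by rewrite -sumrB; apply: eq_bigr => i _; rewrite coefB mulrBl.
Qed.

Lemma polyshiftZ c p t n : polyshift (c *: p) t n = c * polyshift p t n.
Proof.
rewrite (polyshift_widen _ _ (size_scale_leq c p)) mulr_sumr.
by apply: eq_bigr => i _; rewrite coefZ mulrA.
Qed.

Lemma polyshiftXn j t n : polyshift 'X^j t n = t (n + j)%N.
Proof.
rewrite /polyshift size_polyXn big_ord_recr /= coefXn eqxx mul1r big1 ?add0r //.
by move=> i _; rewrite coefXn /= ltn_eqF ?mul0r.
Qed.

Lemma polyshiftC c t n : polyshift c%:P t n = c * t n.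
Proof.
rewrite (polyshift_widen _ _ (size_polyC_leq1 c)) big_ord1 coefC /=.
by rewrite addn0.
Qed.

Lemma polyshiftXM q t n : polyshift ('X * q) t n = polyshift q t n.+1.
Proof.
have size_Xq : (size ('X * q)%R <= (size q).+1)%N.
  by apply: leq_trans (size_polyMleq _ _) _; rewrite size_polyX.
rewrite (polyshift_widen _ _ size_Xq) big_ord_recl coefXM mul0r add0r.
by apply: eq_bigr => i _; rewrite coefXM /= addnS.
Qed.

Lemma polyshift_XsubC_mul r q t n :
  polyshift (('X - r%:P) * q) t n = polyshift q t n.+1 - r * polyshift q t n.
Proof. by rewrite mulrBl polyshiftB polyshiftXM mul_polyC polyshiftZ. Qed.

End ShiftOperator.

Section RootLocation.
Variable R : rcfType.
Local Notation normc := (@Normc.normc R).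
Local Notation Re := (@complex.Re R).
Local Notation Im := (@complex.Im R).
Implicit Types (x z : R[i]).

Lemma normc_sqr z : normc z ^+ 2 = Re z ^+ 2 + Im z ^+ 2.
Proof. by case: z => a b; rewrite /= sqr_sqrtr // addr_ge0 ?sqr_ge0. Qed.

Lemma normc_ge0 z : 0 <= normc z.
Proof. by case: z => a b; apply: sqrtr_ge0. Qed.

Lemma normcE z : `|z| = (normc z)%:C.
Proof. by case: z => a b; rewrite normc_def. Qed.

Lemma normc_ltR z (e : R) : (`|z| < e%:C) = (normc z < e).
Proof. by rewrite normcE ltcR. Qed.

Lemma Re_div_subr_gt0 x z : normc z < normc x -> 0 < Re (x / (x - z)).
Proof.
move=> zx; have := normc_sqr x; have := normc_sqr z; have := normc_ge0 z.
move: zx; move: (normc x) (normc z) => nx nz.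
case: x => x1 x2; case: z => z1 z2 /= zx nz_ge0 nz_sq nx_sq.
set D := (x1 - z1) ^+ 2 + (x2 - z2) ^+ 2.
have D_gt0 : 0 < D.
  rewrite lt_def addr_ge0 ?sqr_ge0 // andbT paddr_eq0 ?sqr_ge0 // !sqrf_eq0 !subr_eq0.
  by apply/negP => /andP[/eqP e1 /eqP e2]; move: nz_sq; rewrite -e1 -e2 -nx_sq; nra.
have -> : x1 * ((x1 - z1) / D) - x2 * - ((x2 - z2) / D) =
    (x1 * (x1 - z1) + x2 * (x2 - z2)) / D by rewrite mulrN opprK !mulrA -mulrDl.
have cauchy_schwarz : x1 * z1 + x2 * z2 <= nx * nz.
  have nxz_ge0 : 0 <= nx * nz by rewrite mulr_ge0 // ltW ?(le_lt_trans nz_ge0).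
  have : (x1 * z1 + x2 * z2) ^+ 2 <= (nx * nz) ^+ 2.
    by rewrite exprMn nx_sq nz_sq; have := sqr_ge0 (x1 * z2 - x2 * z1); nra.
  move=> sq; rewrite leNgt; apply/negP => lt; nra.
apply: divr_gt0 => //; have : nx * nz < nx * nx by rewrite ltr_pM2l // (le_lt_trans nz_ge0).
nra.
Qed.

Implicit Types (p : {poly R[i]}).

Lemma prod_XsubC_logderiv (rs : seq R[i]) x :
  (\prod_(w <- rs) ('X - w%:P)).[x] != 0 ->
  x * (\prod_(w <- rs) ('X - w%:P))^`().[x] =
  (\prod_(w <- rs) ('X - w%:P)).[x] * \sum_(w <- rs) x / (x - w).
Proof.
elim: rs => [|r rs IH]; first by rewrite !big_nil derivC horner0 !mulr0.
rewrite !big_cons derivM !hornerE derivXsubC !hornerE mulf_eq0 negb_or.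
set P := \prod_(w <- rs) _ => /andP[xr_neq0 Px_neq0].
rewrite mulrDr mulrCA IH //; set S := \sum_(w <- rs) _.
rewrite mulrDr -/P mulrA; congr (_ + _).
by rewrite [RHS]mulrC mulrA mulfVK.
Qed.

(* The logarithmic derivative [x p'(x) / p(x)] is [\sum_w x / (x - w)] over
   the roots [w] of [p]; each term has positive real part. *)
Lemma Re_logderiv_gt0 p x : (1 < size p)%N ->
  (forall w, root p w -> normc w < normc x) -> 0 < Re (x * p^`().[x] / p.[x]).
Proof.
move=> p_nonconst roots_small.
have p_neq0 : p != 0 by rewrite -size_poly_gt0 (ltn_trans _ p_nonconst).
have lc_neq0 : lead_coef p != 0 by rewrite lead_coef_eq0.
have [rs p_eq] := closed_field_poly_normal p; set P := \prod_(w <- rs) _ in p_eq.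
have rs_small w : w \in rs -> normc w < normc x.
  by move=> w_rs; apply: roots_small; rewrite p_eq rootZ // root_prod_XsubC.
have Px_neq0 : P.[x] != 0.
  by apply/negP; rewrite -/(root P x) root_prod_XsubC => /rs_small; rewrite ltxx.
rewrite p_eq derivZ !hornerZ mulrCA -mulf_div divff // mul1r.
rewrite prod_XsubC_logderiv // mulrC mulKf // raddf_sum /=.
move: p_nonconst; rewrite p_eq size_scale // size_prod_XsubC ltnS.
case: rs {P p_eq Px_neq0} rs_small => // w rs rs_small _.
rewrite big_cons ltr_pwDl ?Re_div_subr_gt0 ?rs_small ?mem_head //.
rewrite big_seq sumr_ge0 // => v v_rs; rewrite ltW ?Re_div_subr_gt0 ?rs_small //.
by rewrite inE v_rs orbT.
Qed.

Lemma Re_realM (k : R) z : Re (k%:C * z) = k * Re z.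
Proof. by case: z => a b; rewrite /= mul0r subr0. Qed.

(* Nonnegative also at [z = 1], where the quotient is [0]. *)
Lemma Re_affine_div_ge0 (A B : R) z : 0 <= B <= A -> 1 <= normc z ->
  0 <= Re ((A%:C * z - B%:C) / (z - 1)).
Proof.
move=> /andP[B_ge0 BA] z_ge1; have := normc_sqr z; move: z_ge1; move: (normc z) => r.
case: z => x y /= r_ge1 r_sq; rewrite !mul0r !subr0 addr0 mulrN opprK !mulrA -mulrDl.
apply: divr_ge0; last by rewrite addr_ge0 ?sqr_ge0.
have x_le_r : x <= r.
  have : x ^+ 2 <= r ^+ 2 by rewrite r_sq lerDl sqr_ge0.
  by move=> sq; rewrite leNgt; apply/negP => lt; nra.
have : 0 <= (r - 1) * (A * r - B) by rewrite mulr_ge0 //; nra.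
have : 0 <= (A + B) * (r - x) by rewrite mulr_ge0 //; lra.
nra.
Qed.

(* [Q_a] with [m = n.+1]; the equation defining [D_y] reads [xi Q_(-y)(xi) = 0]. *)
Definition theta_charpoly (a : R) (mu : R[i]) (n : nat) : {poly R[i]} :=
  (1 + a)%:C *: 'X^(n.+1) - 'X^n - (a%:C * mu)%:P.

Lemma theta_charpoly_horner a mu n x :
  (theta_charpoly a mu n).[x] = (1 + a)%:C * x ^+ n.+1 - x ^+ n - a%:C * mu.
Proof. by rewrite /theta_charpoly !hornerE. Qed.

Lemma size_theta_charpoly a mu n : 0 < a -> size (theta_charpoly a mu n) = n.+2.
Proof.
move=> a_gt0; have lc_neq0 : (1 + a)%:C != 0.
  by apply/eqP => /complexI /eqP; rewrite paddr_eq0 ?oner_eq0 // ltW.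
rewrite /theta_charpoly -addrA size_addl size_scale ?size_polyXn //.
apply: leq_ltn_trans (size_polyD _ _) _; rewrite size_polyN size_polyXn gtn_max ltnS.
by rewrite ltnSn size_polyN (leq_ltn_trans (size_polyC_leq1 _)).
Qed.

Lemma theta_charpoly_deriv a mu n x :
  x * (theta_charpoly a mu n)^`().[x] = x ^+ n * (((1 + a) * n.+1%:R)%:C * x - n%:R%:C).
Proof.
rewrite /theta_charpoly !derivE !hornerE rmorphM /= !rmorph_nat !hornerMn !hornerXn.
by case: n => [|n] /=; rewrite ?exprS; ring.
Qed.

Lemma theta_charpoly_at_root n a b mu z : a != 0 -> root (theta_charpoly a mu n) z ->
  (theta_charpoly b mu n).[z] = ((a - b) / a)%:C * (z ^+ n * (z - 1)).
Proof.
move=> a_neq0 /rootP Qa_z; have aC_neq0 : a%:C != 0 by rewrite fmorph_eq0.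
have a_mu : a%:C * mu = (1 + a)%:C * z ^+ n.+1 - z ^+ n.
  by apply/eqP; rewrite eq_sym -subr_eq0 -theta_charpoly_horner Qa_z.
rewrite theta_charpoly_horner.
have -> : b%:C * mu = (b / a)%:C * (a%:C * mu) by rewrite fmorph_div /= mulrA divfK.
by rewrite a_mu exprS !fmorph_div /= !rmorphD !rmorphN /= rmorph1; field.
Qed.

Lemma theta_charpoly_roots_mono n a b mu : 0 < a <= b ->
  (forall z, root (theta_charpoly b mu n) z -> normc z < 1) ->
  forall z, root (theta_charpoly a mu n) z -> normc z < 1.
Proof.
move=> /andP[a_gt0 ab] rootsb z /rootP Qa_z; rewrite ltNge; apply/negP => z_ge1.
have [a_eq_b|a_neq_b] := eqVneq a b.
  by have := rootsb z; rewrite -a_eq_b => /(_ (introT rootP Qa_z)); lra.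
have a_lt_b : a < b by rewrite lt_neqAle a_neq_b.
have a_neq0 : a%:C != 0 by apply/eqP => /complexI; lra.
have z_neq0 : z != 0.
  by apply: contraTneq z_ge1 => ->; rewrite Normc.normc0 ler10.
have Qb_z := theta_charpoly_at_root b (lt0r_neq0 a_gt0) (introT rootP Qa_z).
have logderiv_z : z * (theta_charpoly b mu n)^`().[z] / (theta_charpoly b mu n).[z]
    = (a / (a - b))%:C * ((((1 + b) * n.+1%:R)%:C * z - n%:R%:C) / (z - 1)).
  have ab_neq0 : a%:C - b%:C != 0 by rewrite subr_eq0; apply/eqP => /complexI; lra.
  rewrite theta_charpoly_deriv Qb_z !invfM !fmorph_div /=.
  by set w := (z - 1)^-1; field; rewrite ab_neq0 expf_neq0 // a_neq0.
have Re_gt0 : 0 < Re (z * (theta_charpoly b mu n)^`().[z] / (theta_charpoly b mu n).[z]).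
  apply: Re_logderiv_gt0 => [|w /rootsb]; last by lra.
  by rewrite size_theta_charpoly // (lt_le_trans a_gt0 ab).
move: Re_gt0; rewrite logderiv_z Re_realM; apply/negP; rewrite -leNgt.
apply: mulr_le0_ge0; first by rewrite mulr_ge0_le0 ?invr_le0 ?subr_le0 // ltW.
apply: Re_affine_div_ge0 => //; rewrite ler0n /= -natr1.
have : (0 : R) <= n%:R by []; nra.
Qed.

End RootLocation.

Section NullSequences.
Variable R : realType.
Local Notation normc := (@Normc.normc R).
Implicit Types (z : R[i]) (u v t : nat -> R[i]) (p : {poly R[i]}).

Definition null_seq u : Prop :=
  forall eps : R, 0 < eps -> exists n0 : nat, forall n, (n0 <= n)%N -> normc (u n) < eps.

Lemma null_seq0 : null_seq (fun _ => 0).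
Proof. by move=> eps eps_gt0; exists 0%N => n _; rewrite Normc.normc0. Qed.

Lemma null_seqD u v : null_seq u -> null_seq v -> null_seq (fun n => u n + v n).
Proof.
move=> u0 v0 eps eps_gt0.
have [n1 u_small] := u0 _ (divr_gt0 eps_gt0 (ltr0n R 2)).
have [n2 v_small] := v0 _ (divr_gt0 eps_gt0 (ltr0n R 2)).
exists (maxn n1 n2) => n; rewrite geq_max => /andP[n1n n2n].
have := le_normcD (u n) (v n); have := u_small n n1n; have := v_small n n2n.
lra.
Qed.

Lemma null_seqMl c u : null_seq u -> null_seq (fun n => c * u n).
Proof.
move=> u0 eps eps_gt0.
have c1_gt0 : 0 < normc c + 1 by have := normc_ge0 c; lra.
have [n0 u_small] := u0 _ (divr_gt0 eps_gt0 c1_gt0).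
exists n0 => n n0n; rewrite Normc.normcM.
have := u_small n n0n; rewrite ltr_pdivlMr // => small.
have := normc_ge0 c; have := normc_ge0 (u n); nra.
Qed.

Lemma null_seq_sum (I : Type) (s : seq I) (P : pred I) (F : I -> nat -> R[i]) :
  (forall i, P i -> null_seq (F i)) -> null_seq (fun n => \sum_(i <- s | P i) F i n).
Proof.
move=> F0; elim: s => [|i s IH].
  by move=> eps /null_seq0 [n0 small]; exists n0 => n /small; rewrite big_nil.
have Fi0 : null_seq (fun n => if P i then F i n else 0).
  by case: (boolP (P i)) => [/F0|_] //; apply: null_seq0.
move=> eps /(null_seqD Fi0 IH) [n0 small]; exists n0 => n /small.
by rewrite big_cons; case: (P i); rewrite ?add0r.
Qed.

Lemma null_seq_shift u k : null_seq u -> null_seq (fun n => u (n + k)%N).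
Proof.
move=> u0 eps /u0 [n0 small]; exists n0 => n n0n.
by apply: small; rewrite (leq_trans n0n) ?leq_addr.
Qed.

Lemma null_seq_uniform (I : finType) (F : I -> nat -> R[i]) (eps : R) :
  0 < eps -> (forall i, null_seq (F i)) ->
  exists n0 : nat, forall n, (n0 <= n)%N -> forall i, normc (F i n) < eps.
Proof.
move=> eps_gt0 F0.
suff [n0 small] : exists n0 : nat, forall n, (n0 <= n)%N ->
    forall i, i \in enum I -> normc (F i n) < eps.
  by exists n0 => n /small small_n i; rewrite small_n ?mem_enum.
elim: (enum I) => [|i s [n1 small]]; first by exists 0%N.
have [n2 small_i] := F0 i _ eps_gt0.
exists (maxn n1 n2) => n; rewrite geq_max => /andP[n1n n2n] k.
by rewrite inE => /predU1P[->|/small]; [apply: small_i | apply].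
Qed.

(* While [|u n| >= eps] the modulus drops by a fixed amount at each step, and
   once below [eps] it stays there. *)
Lemma null_seq_first_order u r :
  normc r < 1 -> null_seq (fun n => u n.+1 - r * u n) -> null_seq u.
Proof.
move=> r1 v0 eps eps_gt0; set rho := normc r in r1 *.
have rho_ge0 : 0 <= rho := normc_ge0 r.
pose d := (1 - rho) * eps / 2.
have d_gt0 : 0 < d by rewrite /d divr_gt0 // mulr_gt0 // subr_gt0.
have [N v_small] := v0 _ d_gt0.
have step n : (N <= n)%N -> normc (u n.+1) <= rho * normc (u n) + d.
  move=> Nn; rewrite -Normc.normcM -[u n.+1](subrK (r * u n)) addrC.
  by apply: le_trans (le_normcD _ _) _; rewrite lerD2l ltW ?v_small.
have descent k : normc (u (N + k)%N) < eps \/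
    normc (u (N + k)%N) + k%:R * d <= normc (u N).
  elim: k => [|k IH]; first by right; rewrite addn0 mul0r addr0.
  have := step _ (leq_addr k N); rewrite addnS -natr1.
  case: (ltP (normc (u (N + k)%N)) eps) => [small|large] next.
    left; have : rho * normc (u (N + k)%N) <= rho * eps.
      by apply: ler_wpM2l => //; apply: ltW.
    rewrite /d in next d_gt0 *; nra.
  right; case: IH => [|IH]; first by rewrite ltNge large.
  have : (1 - rho) * eps <= (1 - rho) * normc (u (N + k)%N).
    by apply: ler_wpM2l large; lra.
  rewrite /d in next d_gt0 IH *; nra.
pose k0 := Num.Def.archi_bound (normc (u N) / d).
have k0_large : normc (u N) < k0%:R * d.
  by rewrite -ltr_pdivrMr // archi_boundP // divr_ge0 ?normc_ge0 ?ltW.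
exists (N + k0)%N => n k0n; have Nn : (N <= n)%N := leq_trans (leq_addr _ _) k0n.
have [|] := descent (n - N)%N; rewrite subnKC // => // far.
have : k0%:R * d <= (n - N)%:R * d by rewrite ler_pM2r // ler_nat leq_subRL.
have := normc_ge0 (u n); lra.
Qed.

Lemma null_seq_prod_XsubC (rs : seq R[i]) t :
  {in rs, forall z, normc z < 1} ->
  null_seq (polyshift (\prod_(z <- rs) ('X - z%:P)) t) -> null_seq t.
Proof.
elim: rs t => [|r rs IH] t rs_small.
  rewrite big_nil -polyC1 => t0 eps /t0 [n0 small]; exists n0 => n /small.
  by rewrite polyshiftC mul1r.
rewrite big_cons => t0; apply: IH => [z z_rs|].
  by apply: rs_small; rewrite inE z_rs orbT.
apply: (null_seq_first_order (r := r)); first by apply: rs_small; rewrite mem_head.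
by move=> eps /t0 [n0 small]; exists n0 => n /small; rewrite polyshift_XsubC_mul.
Qed.

Lemma null_seq_annihilated p t : p != 0 -> (forall z, root p z -> normc z < 1) ->
  (forall n, polyshift p t n = 0) -> null_seq t.
Proof.
move=> p_neq0 roots_small pt0; have [rs p_eq] := closed_field_poly_normal p.
apply: (null_seq_prod_XsubC (rs := rs)) => [z z_rs|].
  by apply: roots_small; rewrite p_eq rootZ ?lead_coef_eq0 // root_prod_XsubC.
move=> eps /null_seq0 [n0 small]; exists n0 => n /small.
have /eqP := pt0 n; rewrite {1}p_eq polyshiftZ mulf_eq0 lead_coef_eq0.
by rewrite (negbTE p_neq0) => /eqP ->.
Qed.

End NullSequences.

Section Eigencoordinates.
Variables (K : fieldType) (N : nat) (V M : 'M[K]_N) (d : 'I_N -> K).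
Hypotheses (V_unit : V \in unitmx) (MV : forall i, M *m col i V = d i *: col i V).

Lemma mulmx_eigenbasis : M *m V = V *m diag_mx (\row_i d i).
Proof.
apply/matrixP => k l; have /matrixP/(_ k 0) := MV l.
rewrite mul_mx_diag !mxE => MV_kl; rewrite mulrC -MV_kl.
by apply: eq_bigr => q _; rewrite !mxE.
Qed.

Lemma eigencoord_mulmx (X : 'cV_N) i :
  (invmx V *m (M *m X)) i 0 = d i * (invmx V *m X) i 0.
Proof.
have VM : invmx V *m M = diag_mx (\row_i d i) *m invmx V.
  by rewrite -[LHS](mulmxK V_unit) -(mulmxA (invmx V) M V) mulmx_eigenbasis mulKmx.
by rewrite mulmxA VM -mulmxA mul_diag_mx !mxE.
Qed.

End Eigencoordinates.

Section Stability.
Variable R : realType.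
Local Notation normc := (@Normc.normc R).

Lemma D_set_theta_charpoly n b mu z : D_set n.+1 (- b) mu ->
  root (theta_charpoly b mu n) z -> normc z < 1.
Proof.
move=> D /rootP Qb_z; rewrite -normc_ltR; apply: D.
have : z * (theta_charpoly b mu n).[z] = 0 by rewrite Qb_z mulr0.
rewrite theta_charpoly_horner.
have -> : (1 + b)%:C = 1 + b%:C by rewrite rmorphD rmorph1.
have -> : (- b)%:C = - b%:C by rewrite rmorphN.
move=> zQb_z.
by apply/eqP; rewrite -subr_eq0 -zQb_z; apply/eqP; rewrite !exprS; ring.
Qed.

Lemma theta_scalar_null_seq n (lam h : R) (gam : R[i]) (z : int -> R[i]) :
  0 < lam -> 0 < h ->
  (forall w, root (theta_charpoly (lam * h) (gam / lam%:C) n) w -> normc w < 1) ->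
  (forall k : nat, z (k%:Z + 1) =
     z k%:Z + h%:C * (- (lam%:C * z (k%:Z + 1)) + gam * z (k%:Z - n%:Z))) ->
  null_seq (fun k : nat => z k%:Z).
Proof.
move=> lam_gt0 h_gt0 roots_small rec.
have lam_neq0 : lam%:C != 0 by apply/eqP => /complexI; lra.
pose t k := z (k%:Z - n%:Z).
have t_null : null_seq t.
  apply: (null_seq_annihilated (p := theta_charpoly (lam * h) (gam / lam%:C) n)) => //.
    by rewrite -size_poly_gt0 size_theta_charpoly ?mulr_gt0.
  move=> k; rewrite !polyshiftB polyshiftZ !polyshiftXn polyshiftC /t.
  have -> : (k + n.+1)%N%:Z - n%:Z = k%:Z + 1 by lia.
  have -> : (k + n)%N%:Z - n%:Z = k%:Z by lia.
  rewrite -[z k%:Z](addrK (h%:C * (- (lam%:C * z (k%:Z + 1)) + gam * z (k%:Z - n%:Z)))).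
  by rewrite -rec rmorphD rmorph1 rmorphM /=; field.
move=> eps /(null_seq_shift n t_null) [k0 small]; exists k0 => k /small.
by rewrite /t (_ : (k + n)%N%:Z - n%:Z = k%:Z) //; lia.
Qed.

Lemma theta1_recursion_eigencoord (N : nat) (A B V : 'M[R[i]]_N) (m : nat) (h : R)
    (dA dB : 'I_N -> R[i]) (Y : int -> 'cV_N) (i : 'I_N) (k : nat) :
  V \in unitmx -> (forall i, A *m col i V = dA i *: col i V) ->
  (forall i, B *m col i V = dB i *: col i V) -> theta1_recursion A B m h Y ->
  let z w := (invmx V *m Y w) i 0 in
  z (k%:Z + 1) = z k%:Z + h%:C * (- (dA i * z (k%:Z + 1)) + dB i * z (k%:Z - m%:Z + 1)).
Proof.
move=> V_unit AV BV rec z.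
rewrite /z -!(eigencoord_mulmx V_unit AV, eigencoord_mulmx V_unit BV).
by rewrite {1}rec mulmxDr -scalemxAr mulmxDr mulmxN !mxE.
Qed.

Lemma tends_to_zero_coords (N : nat) (V : 'M[R[i]]_N) (X Y : nat -> 'cV[R[i]]_N) :
  (forall k, Y k = V *m X k) -> (forall l, null_seq (fun k => X k l 0)) ->
  tends_to_zero Y.
Proof.
move=> YVX X_null eps eps_gt0.
have Y_null i : null_seq (fun k => Y k i 0).
  have := null_seq_sum (enum 'I_N) (P := xpredT) (fun l _ => null_seqMl (V i l) (X_null l)).
  move=> sum_null e /sum_null [k0 small]; exists k0 => k /small.
  by rewrite YVX mxE big_enum.
have [k0 small] := null_seq_uniform eps_gt0 Y_null.
by exists k0 => k /small small_k i; rewrite normc_ltR.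
Qed.

End Stability.

Theorem mainTheorem12 (R : realType) (N : nat) (A B V : 'M[R[i]]_N)
    (lam : 'I_N -> R) (gam : 'I_N -> R[i]) (tau : R) (m : nat) (j : 'I_N) :
  V \in unitmx ->
  (forall i : 'I_N, A *m col i V = (lam i)%:C *: col i V) ->
  (forall i : 'I_N, B *m col i V = gam i *: col i V) ->
  (forall i : 'I_N, 0 < lam i) ->
  0 < tau -> (0 < m)%N ->
  (forall i : 'I_N, lam i <= lam j) ->
  (forall i : 'I_N, D_set m (- (lam j * (tau / m%:R))) (gam i / (lam i)%:C)) ->
  theta1_stable A B m (tau / m%:R).
Proof.
move=> V_unit AV BV lam_gt0 tau_gt0 m_gt0 lam_max D.
case: m m_gt0 D => // n _ D Y rec; set h := tau / n.+1%:R in D rec *.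
have h_gt0 : 0 < h by rewrite divr_gt0 ?ltr0n.
apply: (tends_to_zero_coords (V := V) (X := fun k : nat => invmx V *m Y k%:Z)
  (Y := fun k : nat => Y k%:Z)).
  by move=> k; rewrite mulKVmx.
move=> i; apply: (theta_scalar_null_seq (lam := lam i) (h := h) (gam := gam i) (n := n)
  (z := fun w => (invmx V *m Y w) i 0)) => //.
  apply: (theta_charpoly_roots_mono (b := lam j * h)).
    by rewrite mulr_gt0 //= ler_pM2r.
  by move=> w; apply: D_set_theta_charpoly.
move=> k; have := theta1_recursion_eigencoord i k V_unit AV BV rec.
by rewrite /= (_ : k%:Z - n.+1%:Z + 1 = k%:Z - n%:Z) //; lia.
Qed.
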